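(* Let $s,u>0$ and $\nu_0=0$. For $\gamma>0$ let $\bar y_2(s,\gamma,u)=\frac12\big(1+\frac s\gamma-\sqrt{(1+s/\gamma)^2-4u/\gamma}\big)$. Then $$\lim_{\gamma\to0}\bar y_2(s,\gamma,u)=\frac us .$$ Moreover, denoting by $y_\infty(y_0,s,\gamma,u)=\lim_{t\to\infty}y(t;y_0)$ the long-term limit of the solution of $\dot y=-y(1-y)[s+\gamma(1-y)]+u(1-y)$, $y(0)=y_0\in[0,1]$, we have $$\lim_{\gamma\to0}y_\infty(y_0,s,\gamma,u)=\begin{cases}\min\{u/s,1\}, & y_0\in[0,1),\\ 1, & y_0=1.\end{cases}$$ *)

From HB Require Import structures.
From mathcomp Require Import all_boot all_order all_algebra.
From mathcomp Require Import all_classical all_reals all_analysis.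
Set Implicit Arguments. Unset Strict Implicit. Unset Printing Implicit Defensive.
Import Order.TTheory GRing.Theory Num.Theory.
Import numFieldNormedType.Exports.
Local Open Scope classical_set_scope.
Local Open Scope ring_scope.

Definition ybar2 (R : realType) (s g u : R) : R :=
  2^-1 * (1 + s / g - Num.sqrt ((1 + s / g) ^+ 2 - 4 * u / g)).

Definition ode_rhs (R : realType) (s g u y : R) : R :=
  - y * (1 - y) * (s + g * (1 - y)) + u * (1 - y).

Definition is_ivp_solution (R : realType) (s g u y0 : R) (y : R -> R) : Prop :=
  y 0 = y0 /\
  {within `[0, +oo[, continuous y} /\
  (forall t : R, 0 < t -> is_derive t 1 y (ode_rhs s g u (y t))).

From HB Require Import structures.
From mathcomp Require Import all_boot all_order all_algebra.
From mathcomp Require Import all_classical all_reals all_analysis.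
From mathcomp Require Import ring lra.
Import Order.TTheory GRing.Theory Num.Theory.
Import numFieldNormedType.Exports.
Local Open Scope classical_set_scope.
Local Open Scope ring_scope.

(* The right-hand side is the polynomial p(y) = (1 - y)(g y^2 - (s + g) y + u).
   By a Gronwall-type estimate, a solution of y' = p(y) that meets a root of p
   is constant.  Hence p(Y) never changes sign, Y is monotone and cannot cross
   a root of p, so it converges to a root of p.  For u < s the roots of p up
   to 1 are ybar2 < 1 and 1, and below 1 the sign of p is that of ybar2 - y,
   so every solution started in [0, 1) tends to ybar2, which tends to u / s
   as g -> 0 once its numerator is rationalized.  For s <= u and g < s,
   p > 0 below 1 and the solutions tend to 1; so does the constant solution
   started at 1. *)

Section EquilibriumInvariance.
Context {R : realType}.

Lemma is_derive_sqr_dist_expR (c a : R) {Y : R -> R} {t dY : R} :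
  is_derive t 1 Y dY ->
  is_derive t 1 (fun x => (Y x - c) ^+ 2 * expR (a * x))
    ((Y t - c) ^+ 2 * expR (a * t) * a + 2 * (Y t - c) * dY * expR (a * t)).
Proof.
move=> dY_t.
have dexp : is_derive t 1 (expR \o (a \*: id)) (expR (a * t) * (a *: 1)).
  exact: is_derive1_comp.
have dsub : is_derive t 1 (Y - cst c) (dY - 0) by exact: is_deriveB.
have dsqr := is_deriveX 2 dsub.
apply: is_derive_eq (is_deriveM dsqr dexp) _.
rewrite /= /GRing.scale /= mulr1.
rewrite -[(_ ^+ 2) t]/((Y t - c) ^+ 2) -[(Y - cst c) t]/(Y t - c).
ring.
Qed.

Lemma within_continuous_sqr_dist_expR (A : set R) (c a : R) (Y : R -> R) :
  {within A, continuous Y} ->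
  {within A, continuous (fun x => (Y x - c) ^+ 2 * expR (a * x))}.
Proof.
move=> Ycont x; apply: (@continuousM _ (@subspace R A) (fun x => (Y x - c) ^+ 2)).
  apply: (@continuous_comp (@subspace R A) R R (fun x => Y x - c) (fun y => y ^+ 2)).
    by apply: continuousB; [exact: Ycont | exact: cst_continuous].
  exact: exprn_continuous.
apply: continuous_subspaceT => {}x.
apply: (@continuous_comp _ _ _ ( *%R a) expR); last exact: continuous_expR.
by apply: continuousM; [exact: cst_continuous | by move=> ?].
Qed.

(* For k(Y) between m and M on [0, T], (Y - c)^2 e^(-2 m t) is nondecreasing
   and (Y - c)^2 e^(-2 M t) is nonincreasing there. *)
Lemma equilibrium_invariant (Y k : R -> R) (c : R) :
  {within `[0, +oo[, continuous Y} ->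
  (forall t : R, 0 < t -> is_derive t 1 Y ((Y t - c) * k (Y t))) ->
  continuous k -> forall T : R, 0 <= T -> (Y T = c <-> Y 0 = c).
Proof.
move=> Ycont Yder kcont T T_ge0.
have YcontT : {within `[0, T], continuous Y}.
  by apply: continuous_subspaceW Ycont; apply: subset_itvl; rewrite bnd_simp.
have kYcont : {within `[0, T], continuous (k \o Y)}.
  move=> x; apply: (@continuous_comp (subspace `[0, T]) R R Y k x).
    exact: YcontT.
  exact: kcont.
have [xM _ kY_le] := EVT_max T_ge0 kYcont.
have [xm _ kY_ge] := EVT_min T_ge0 kYcont.
pose h a x := (Y x - c) ^+ 2 * expR (a * x).
have h_ge0 a x : 0 <= h a x by rewrite mulr_ge0 ?sqr_ge0 ?expR_ge0.
have h_eq0 a x : h a x = 0 -> Y x = c.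
  by move/eqP; rewrite mulf_eq0 (gt_eqF (expR_gt0 _)) orbF sqrf_eq0 subr_eq0 => /eqP.
have h_der (a x : R) : 0 < x -> is_derive x 1 (h a) (h a x * (a + 2 * k (Y x))).
  move=> x_gt0; apply: is_derive_eq (is_derive_sqr_dist_expR c a (Yder x x_gt0)) _.
  by rewrite /h; ring.
have h_cont (a : R) : {within `[0, T], continuous (h a)}.
  exact: within_continuous_sqr_dist_expR.
have in_T (x : R) : x \in `]0, T[ -> (0 < x) * (x \in `[0, T]).
  by rewrite !in_itv /= => /andP[x0 xT]; rewrite x0 !ltW.
have h_derivable (a x : R) : x \in `]0, T[ -> derivable (h a) x 1.
  by move=> /in_T[x0 _]; exact: (@ex_derive _ _ _ _ _ _ _ (h_der a x x0)).
split => [YT|Y0].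
- have : h (- 2 * k (Y xm)) 0 <= h (- 2 * k (Y xm)) T.
    apply: (ger0_derive1_ndecr _ _ (h_cont _)) => //; first exact: h_derivable.
    move=> x /in_T[x0 xT]; rewrite derive1E (@derive_val _ _ _ _ _ _ _ (h_der _ x x0)).
    by rewrite mulr_ge0 //; have /= := kY_ge x xT; lra.
  rewrite /h YT subrr expr0n /= mul0r => h0_le0.
  by apply: (h_eq0 (- 2 * k (Y xm))); apply/le_anti; rewrite h0_le0 h_ge0.
- have : h (- 2 * k (Y xM)) T <= h (- 2 * k (Y xM)) 0.
    apply: (ler0_derive1_nincr _ _ (h_cont _)) => //; first exact: h_derivable.
    move=> x /in_T[x0 xT]; rewrite derive1E (@derive_val _ _ _ _ _ _ _ (h_der _ x x0)).
    by rewrite mulr_ge0_le0 //; have /= := kY_le x xT; lra.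
  rewrite /h Y0 subrr expr0n /= mul0r => hT_le0.
  by apply: (h_eq0 (- 2 * k (Y xM))); apply/le_anti; rewrite hT_le0 h_ge0.
Qed.

End EquilibriumInvariance.

Section Asymptotics.
Context {R : realType}.

(* If f(L) > 0, then eventually Y' > f(L) / 2 while Y stays within 1 of L, so
   Y would rise by more than 2 over a time 4 / f(L). *)
Lemma cvgy_autonomous_root (Y f : R -> R) (L : R) :
  (forall t : R, 0 < t -> is_derive t 1 Y (f (Y t))) -> continuous f ->
  Y t @[t --> +oo] --> L -> f L = 0.
Proof.
have not_gt0 (Z F : R -> R) (l : R) :
    (forall t : R, 0 < t -> is_derive t 1 Z (F (Z t))) -> continuous F ->
    Z t @[t --> +oo] --> l -> ~ 0 < F l.
  move=> Zder Fcont Zl Fl_gt0.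
  have FZl : (F \o Z) t @[t --> +oo] --> F l by apply: continuous_cvg; [exact: Fcont | exact: Zl].
  have [M [_ Z_near]] : \forall t \near +oo, F l / 2 < F (Z t) /\ `|l - Z t| < 1.
    by apply/near_andP; split; [apply: cvgr_gt; [exact: FZl | lra] | exact: cvgr_dist_lt].
  pose t1 := Num.max M 0 + 1; pose t2 := t1 + 4 / F l.
  have M_le_max : M <= Num.max M 0 by rewrite le_max lexx.
  have max_ge0 : 0 <= Num.max M 0 by rewrite le_max lexx orbT.
  have M_lt_t1 : M < t1 by rewrite /t1; lra.
  have t1_gt0 : 0 < t1 by rewrite /t1; lra.
  have t1_lt_t2 : t1 < t2 by rewrite /t2 ltrDl divr_gt0.
  have [c] :
      exists2 c, c \in `]t1, t2[ & Z t2 - Z t1 = F (Z c) * (t2 - t1).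
    apply: MVT => // [x|]; first by rewrite in_itv /= => /andP[? _]; apply: Zder; lra.
    apply: derivable_within_continuous => x; rewrite in_itv /= => /andP[? _].
    by apply: (@ex_derive _ _ _ _ _ _ _ (Zder x _)); lra.
  rewrite in_itv /= => /andP[t1_lt_c _] Zt2_Zt1.
  have [FZc_gt _] := Z_near c (lt_trans M_lt_t1 t1_lt_c).
  have [_] := Z_near t1 M_lt_t1; rewrite ltr_distlC => /andP[Zt1_gt _].
  have [_] := Z_near t2 (lt_trans M_lt_t1 t1_lt_t2).
  rewrite ltr_distlC => /andP[_ Zt2_lt].
  have : F l / 2 * (t2 - t1) < F (Z c) * (t2 - t1) by rewrite ltr_pM2r // subr_gt0.
  have -> : F l / 2 * (t2 - t1) = 2 by rewrite /t2; field; rewrite gt_eqF.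
  rewrite -Zt2_Zt1; lra.
move=> Yder fcont YL.
have [fL_lt0|fL_gt0|//] := ltgtP (f L) 0; exfalso.
- apply: (not_gt0 (- Y) (fun y => - f (- y)) (- L)); last by rewrite opprK oppr_gt0.
  + move=> t t_gt0; apply: is_derive_eq (is_deriveN (Yder t t_gt0)) _.
    by rewrite /= opprK.
  + move=> y; apply: continuousN.
    by apply: (@continuous_comp _ _ _ -%R f); [exact: oppr_continuous | exact: fcont].
  + exact: cvgN.
- exact: (not_gt0 Y f L).
Qed.

Lemma nondecreasing_bounded_cvgy (Y : R -> R) (B : R) :
  (forall x y : R, 0 <= x -> x <= y -> Y x <= Y y) ->
  (forall t : R, 0 <= t -> Y t <= B) -> exists L : R, Y t @[t --> +oo] --> L.
Proof.
move=> Ymono Ybnd; pose Z t := Y (Num.max t 0).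
have Znd : nondecreasing_fun Z.
  by move=> x y xy; apply: Ymono; [rewrite le_max lexx orbT | exact: le_max2].
have Zbnd : has_ubound (range Z) by exists B => _ [t _ <-]; apply: Ybnd; rewrite le_max lexx orbT.
exists (sup (range Z)); apply: cvg_trans (nondecreasing_cvgr Znd Zbnd).
apply: near_eq_cvg; near=> t; by rewrite /Z max_l.
Unshelve. all: by end_near.
Qed.

Lemma continuous_nonvanishing_gt0 (f : R -> R) :
  {within `[0, +oo[, continuous f} -> (forall t : R, 0 <= t -> f t != 0) ->
  0 < f 0 -> forall t : R, 0 <= t -> 0 < f t.
Proof.
move=> fcont f_neq0 f0_gt0 t t_ge0; rewrite ltNge; apply/negP => ft_le0.
have [c] : exists2 c, c \in `[0, t] & f c = 0.
  apply: IVT => //; last by rewrite ge_min ft_le0 orbT le_max ltW.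
  by apply: continuous_subspaceW fcont; apply: subset_itvl; rewrite bnd_simp.
by rewrite in_itv /= => /andP[c_ge0 _] /eqP; apply/negP/f_neq0.
Qed.
End Asymptotics.

Definition poly_ode_solution {R : realType} (p : {poly R}) (Y : R -> R) : Prop :=
  {within `[0, +oo[, continuous Y} /\
  forall t : R, 0 < t -> is_derive t 1 Y p.[Y t].

Section PolyODE.
Context {R : realType} {p : {poly R}} {Y : R -> R}.
Hypothesis Ysol : poly_ode_solution p Y.

Lemma poly_ode_equilibrium {c T : R} :
  root p c -> 0 <= T -> (Y T = c <-> Y 0 = c).
Proof.
case: Ysol => Ycont Yder /factor_theorem[q p_eq] T_ge0.
move: T T_ge0; apply: (equilibrium_invariant Y (horner q) c Ycont); last exact: continuous_horner.
by move=> t t_gt0; rewrite mulrC -hornerXsubC -hornerM -p_eq; exact: Yder.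
Qed.

Lemma poly_ode_lt_root {c t : R} : root p c -> Y 0 < c -> 0 <= t -> Y t < c.
Proof.
move=> pc Y0_lt t_ge0; rewrite -subr_gt0.
apply: (continuous_nonvanishing_gt0 (fun t => c - Y t)) => //; last by rewrite subr_gt0.
  by move=> x; apply: continuousB; [exact: cst_continuous | exact: Ysol.1].
move=> x x_ge0; rewrite subr_eq0 eq_sym; apply/eqP.
by move/(poly_ode_equilibrium pc x_ge0) => Y0c; move: Y0_lt; rewrite Y0c ltxx.
Qed.

Lemma poly_ode_horner_gt0 {t : R} : 0 < p.[Y 0] -> 0 <= t -> 0 < p.[Y t].
Proof.
pose P : R -> R := horner p.
have P_cont : continuous P by exact: continuous_horner.
move=> pY0_gt0; move: t; apply: (continuous_nonvanishing_gt0 (P \o Y)) => //.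
  move=> x; apply: (@continuous_comp (@subspace R `[0, +oo[) R R Y P x).
    exact: Ysol.1.
  exact: P_cont.
move=> t t_ge0; rewrite /P /=; apply/eqP => pYt.
have Yt_root : root p (Y t) by exact/rootP.
by move: pY0_gt0; rewrite ((poly_ode_equilibrium Yt_root t_ge0).1 erefl) pYt ltxx.
Qed.

Lemma poly_ode_nondecreasing :
  0 < p.[Y 0] -> forall x y : R, 0 <= x -> x <= y -> Y x <= Y y.
Proof.
case: Ysol => Ycont Yder pY0_gt0.
apply: ger0_derive1_ndecry Ycont => x; rewrite in_itv /= andbT => x_gt0.
  exact: (@ex_derive _ _ _ _ _ _ _ (Yder x x_gt0)).
rewrite derive1E (@derive_val _ _ _ _ _ _ _ (Yder x x_gt0)).
exact/ltW/poly_ode_horner_gt0/ltW.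
Qed.

Lemma poly_ode_cvg_up {c : R} : 0 < p.[Y 0] -> root p c -> Y 0 < c ->
  exists2 L : R, Y t @[t --> +oo] --> L & root p L && (Y 0 <= L <= c).
Proof.
move=> pY0_gt0 pc Y0_lt.
have [L YL] := nondecreasing_bounded_cvgy Y c (poly_ode_nondecreasing pY0_gt0)
  (fun t t_ge0 => ltW (poly_ode_lt_root pc Y0_lt t_ge0)).
exists L => //; apply/and3P; split.
- apply/rootP; apply: (cvgy_autonomous_root Y (horner p) L Ysol.2 _ YL).
  exact: continuous_horner.
- apply: (cvgr_to_ge YL); near=> t; apply: poly_ode_nondecreasing => //.
- apply: (cvgr_to_le YL); near=> t; exact/ltW/(poly_ode_lt_root pc Y0_lt).
Unshelve. all: by end_near.
Qed.

End PolyODE.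

Section PolyODETheory.
Context {R : realType}.

Let horner_reflect (p : {poly R}) (x : R) : (- (p \Po - 'X)).[x] = - p.[- x].
Proof. by rewrite hornerN horner_comp hornerN hornerX. Qed.

Let root_reflect (p : {poly R}) (x : R) : root (- (p \Po - 'X)) x = root p (- x).
Proof. by rewrite /root horner_reflect oppr_eq0. Qed.

Lemma poly_ode_solutionN {p : {poly R}} {Y : R -> R} :
  poly_ode_solution p Y -> poly_ode_solution (- (p \Po - 'X)) (- Y).
Proof.
case=> Ycont Yder; split.
  by move=> x; apply: continuousN; exact: Ycont.
move=> t t_gt0; apply: is_derive_eq (is_deriveN (Yder t t_gt0)) _.
by rewrite horner_reflect /= opprK.
Qed.

Lemma poly_ode_cvg_between {p : {poly R}} {Y : R -> R} (a b : R) :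
  poly_ode_solution p Y -> a <= Y 0 <= b -> 0 <= p.[a] -> p.[b] <= 0 ->
  exists2 L : R, Y t @[t --> +oo] --> L & root p L && (a <= L <= b).
Proof.
move=> Ysol /andP[a_le b_ge] pa_ge0 pb_le0.
have p_cont (x y : R) : {within `[x, y], continuous (horner p)}.
  by apply: continuous_subspaceT; exact: continuous_horner.
have [pY0_lt0|pY0_gt0|pY0_eq0] := ltgtP p.[Y 0] 0.
- (* the reflection y |-> -y makes the solution increasing *)
  have [c] : exists2 c, c \in `[a, Y 0] & p.[c] = 0.
    by apply: IVT => //; rewrite ge_min le_max pa_ge0 (ltW pY0_lt0) orbT.
  rewrite in_itv /= => /andP[a_le_c c_le] pc.
  have c_lt : c < Y 0.
    by rewrite lt_neqAle c_le andbT; apply: contraTneq pY0_lt0 => <-; rewrite pc ltxx.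
  have [|||L YL] := @poly_ode_cvg_up _ _ _ (poly_ode_solutionN Ysol) (- c).
  + by rewrite horner_reflect /= opprK oppr_gt0.
  + by rewrite root_reflect opprK; apply/rootP.
  + by rewrite /= ltrN2.
  rewrite root_reflect => /and3P[pL Y0_le L_le].
  exists (- L); first by apply/cvgNP; rewrite opprK.
  by rewrite pL /=; have : - Y 0 <= L := Y0_le; lra.
- have [c] : exists2 c, c \in `[Y 0, b] & p.[c] = 0.
    by apply: IVT => //; rewrite ge_min le_max pb_le0 (ltW pY0_gt0) orbT.
  rewrite in_itv /= => /andP[c_ge c_le_b] pc.
  have c_gt : Y 0 < c.
    by rewrite lt_neqAle c_ge andbT; apply: contraTneq pY0_gt0 => ->; rewrite pc ltxx.
  have pc_root : root p c by apply/rootP.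
  have [L YL /and3P[pL Y0_le L_le]] := poly_ode_cvg_up Ysol pY0_gt0 pc_root c_gt.
  by exists L => //; rewrite pL /=; apply/andP; split; lra.
- have pY0_root : root p (Y 0) by apply/rootP.
  exists (Y 0); last by rewrite pY0_root a_le b_ge.
  apply: cvg_near_cst; near=> t.
  by apply/(poly_ode_equilibrium Ysol pY0_root).
Unshelve. all: by end_near.
Qed.

Lemma poly_ode_cvg_attractor {p : {poly R}} {Y : R -> R} (c : R) :
  poly_ode_solution p Y -> root p c ->
  (forall y, Y 0 <= y < c -> 0 < p.[y]) -> (forall y, c < y <= Y 0 -> p.[y] < 0) ->
  Y t @[t --> +oo] --> c.
Proof.
move=> Ysol pc p_gt0 p_lt0; have pc0 : p.[c] = 0 by exact/rootP.
have [Y0_lt|Y0_gt|Y0_eq] := ltgtP (Y 0) c.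
- have [|||L YL /and3P[/rootP pL L_ge L_le]] := poly_ode_cvg_between (Y 0) c Ysol.
  + by rewrite lexx ltW.
  + by rewrite ltW // p_gt0 // lexx.
  + by rewrite pc0.
  have [L_lt|c_lt|<- //] := ltgtP L c.
  + by have := p_gt0 L; rewrite L_ge L_lt pL ltxx => /(_ isT).
  + by move: L_le; rewrite leNgt c_lt.
- have [|||L YL /and3P[/rootP pL L_ge L_le]] := poly_ode_cvg_between c (Y 0) Ysol.
  + by rewrite lexx ltW.
  + by rewrite pc0.
  + by rewrite ltW // p_lt0 // lexx andbT.
  have [L_lt|c_lt|<- //] := ltgtP L c.
  + by move: L_ge; rewrite leNgt L_lt.
  + by have := p_lt0 L; rewrite L_le c_lt pL ltxx => /(_ isT).
- apply: cvg_near_cst; near=> t.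
  by apply/(poly_ode_equilibrium Ysol pc).
Unshelve. all: by end_near.
Qed.
End PolyODETheory.

Definition ode_poly {R : realType} (s g u : R) : {poly R} :=
  (1 - 'X) * (g *: 'X^2 - (s + g) *: 'X + u%:P).

Lemma horner_ode_poly {R : realType} (s g u y : R) :
  (ode_poly s g u).[y] = ode_rhs s g u y.
Proof.
rewrite /ode_poly /ode_rhs !(hornerM, hornerD, hornerN, hornerZ, hornerXn, hornerX, hornerC).
ring.
Qed.

Lemma ivp_solution_poly_ode {R : realType} {s g u y0 : R} {Y : R -> R} :
  is_ivp_solution s g u y0 Y -> poly_ode_solution (ode_poly s g u) Y.
Proof.
by case=> _ [Ycont Yder]; split => // t t_gt0; rewrite horner_ode_poly; exact: Yder.
Qed.

Section OdeRhs.
Context {R : realType} (s g u : R).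
Hypothesis g_gt0 : 0 < g.

Lemma ode_rhs_factor : u < s ->
  exists2 y2 : R, ybar2 s g u < 1 < y2 &
    forall y, ode_rhs s g u y = g * (1 - y) * (y2 - y) * (ybar2 s g u - y).
Proof.
move=> u_lt_s; have g_neq0 : g != 0 by rewrite gt_eqF.
rewrite /ybar2; set a := 1 + s / g; set D := a ^+ 2 - 4 * u / g.
have D_gt : (1 - s / g) ^+ 2 < D.
  have -> : D = (1 - s / g) ^+ 2 + 4 * ((s - u) / g) by rewrite /D /a; field.
  by rewrite ltrDl mulr_gt0 // divr_gt0 // subr_gt0.
have D_gt0 : 0 < D by rewrite (le_lt_trans _ D_gt) ?sqr_ge0.
have r_sq : Num.sqrt D ^+ 2 = D by rewrite sqr_sqrtr // ltW.
have /ltr_normlP[r_gt r_gt'] : `|1 - s / g| < Num.sqrt D by rewrite -sqrtr_sqr ltr_sqrt.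
set r := Num.sqrt D in r_gt r_gt' r_sq *.
exists (2^-1 * (a + r)); first by apply/andP; split; rewrite /a; lra.
move=> y; have u_eq : u = g * (a ^+ 2 - r ^+ 2) / 4 by rewrite r_sq /D; field.
have s_eq : s = g * (a - 1) by rewrite /a; field.
by rewrite /ode_rhs u_eq s_eq; field.
Qed.

Lemma ode_rhs_gt0 (y : R) : g < s <= u -> y < 1 -> 0 < ode_rhs s g u y.
Proof.
move=> /andP[g_lt_s s_le_u] y_lt1.
have -> : ode_rhs s g u y = (1 - y) * ((1 - y) * (s - g * y) + (u - s)).
  by rewrite /ode_rhs; ring.
have gy_lt : g * y < s by rewrite (lt_trans _ g_lt_s) // gtr_pMr.
by rewrite mulr_gt0 ?subr_gt0 // ltr_wpDr ?subr_ge0 // mulr_gt0 ?subr_gt0.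
Qed.
End OdeRhs.

Lemma ybar2_rationalized {R : realType} (s g u : R) : 0 < s -> 0 < g ->
  0 <= (g + s) ^+ 2 - 4 * u * g ->
  ybar2 s g u = 2 * u / (g + s + Num.sqrt ((g + s) ^+ 2 - 4 * u * g)).
Proof.
move=> s_gt0 g_gt0; set D := _ - _ => D_ge0.
have g_neq0 : g != 0 by rewrite gt_eqF.
rewrite /ybar2 (_ : (1 + s / g) ^+ 2 - 4 * u / g = D * (g^-1) ^+ 2); last first.
  by rewrite /D; field.
rewrite sqrtrM // sqrtr_sqr ger0_norm ?invr_ge0 ?ltW //.
have r_ge0 := sqrtr_ge0 D; have r_sq : Num.sqrt D ^+ 2 = D by rewrite sqr_sqrtr.
set r := Num.sqrt D in r_ge0 r_sq *.
apply: (canRL (mulfK _)); first by rewrite gt_eqF //; lra.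
rewrite (_ : 2 * u = ((g + s) ^+ 2 - r ^+ 2) / (2 * g)); last by rewrite r_sq /D; field.
by field; rewrite gt_eqF //; lra.
Qed.

Lemma ybar2_cvg {R : realType} {s u : R} : 0 < s -> 0 < u ->
  ybar2 s g u @[g --> 0^'+] --> u / s.
Proof.
move=> s_gt0 u_gt0.
pose D : {poly R} := ('X + s%:P) ^+ 2 - (4 * u) *: 'X.
have D_eq (g : R) : D.[g] = (g + s) ^+ 2 - 4 * u * g by rewrite !hornerE.
have D0 : D.[0] = s ^+ 2 by rewrite D_eq add0r mulr0 subr0.
have F_cvg : 2 * u / (g + s + Num.sqrt D.[g]) @[g --> 0] --> u / s.
  have -> : u / s = 2 * u / (0 + s + Num.sqrt D.[0]).
    by rewrite D0 sqrtr_sqr ger0_norm ?ltW // add0r; field; rewrite !gt_eqF ?addr_gt0.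
  apply: cvgM; first exact: cvg_cst.
  apply: cvgV; first by rewrite D0 sqrtr_sqr ger0_norm ?ltW // add0r gt_eqF ?addr_gt0.
  apply: cvgD; first by apply: cvgD; [exact: cvg_id | exact: cvg_cst].
  apply: continuous_cvg; first exact: sqrt_continuous.
  exact: continuous_horner.
apply: cvg_trans (cvg_at_right_filter F_cvg); apply: near_eq_cvg; near=> g.
have g_gt0 : 0 < g by near: g; exact: nbhs_right_gt.
have g_small : g * (4 * u) < s ^+ 2.
  rewrite -ltr_pdivlMr ?mulr_gt0 //; near: g; apply: nbhs_right_lt.
  by rewrite divr_gt0 ?exprn_gt0 ?mulr_gt0.
rewrite D_eq ybar2_rationalized //; have : 0 < g * s by rewrite mulr_gt0.
have : 0 < g * g by rewrite mulr_gt0.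
rewrite !expr2 in g_small *; lra.
Unshelve. all: by end_near.
Qed.

Section IvpSolution.
Context {R : realType} {s g u y0 : R} {Y : R -> R}.
Hypothesis Ysol : is_ivp_solution s g u y0 Y.

Let Ypoly : poly_ode_solution (ode_poly s g u) Y := ivp_solution_poly_ode Ysol.
Let Y0 : Y 0 = y0 := Ysol.1.
Let root_ode_poly (c : R) : root (ode_poly s g u) c = (ode_rhs s g u c == 0).
Proof. by rewrite /root horner_ode_poly. Qed.

Lemma ivp_solution_cvg : 0 <= u -> 0 <= y0 <= 1 -> exists L : R, Y t @[t --> +oo] --> L.
Proof.
move=> u_ge0 y0_01; have [|||L YL _] := poly_ode_cvg_between 0 1 Ypoly; last by exists L.
- by rewrite Y0.
- by rewrite horner_ode_poly /ode_rhs; lra.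
- by rewrite horner_ode_poly /ode_rhs; lra.
Qed.

Lemma ivp_solution_cvg_one : y0 = 1 -> Y t @[t --> +oo] --> (1 : R).
Proof.
move=> y0_eq1; apply: (poly_ode_cvg_attractor 1 Ypoly); rewrite ?Y0 ?y0_eq1.
- by rewrite root_ode_poly /ode_rhs subrr !(mulr0, mul0r) addr0.
- by move=> y /andP[]; lra.
- by move=> y /andP[]; lra.
Qed.

Hypothesis g_gt0 : 0 < g.

Lemma ivp_solution_cvg_ybar2 : u < s -> y0 < 1 ->
  Y t @[t --> +oo] --> ybar2 s g u.
Proof.
move=> u_lt_s y0_lt1; have [y2 /andP[y1_lt1 y2_gt1] rhs_eq] := ode_rhs_factor s g u g_gt0 u_lt_s.
apply: (poly_ode_cvg_attractor _ Ypoly); rewrite ?Y0.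
- by rewrite root_ode_poly rhs_eq subrr mulr0.
- move=> y /andP[y0_le y_lt]; rewrite horner_ode_poly rhs_eq.
  by rewrite !mulr_gt0 ?subr_gt0 //; lra.
- move=> y /andP[y_gt y_le]; rewrite horner_ode_poly rhs_eq.
  by rewrite pmulr_rlt0 ?subr_lt0 // !mulr_gt0 ?subr_gt0 //; lra.
Qed.

Lemma ivp_solution_cvg_one_of_le : g < s <= u -> y0 < 1 -> Y t @[t --> +oo] --> (1 : R).
Proof.
move=> gsu y0_lt1; apply: (poly_ode_cvg_attractor 1 Ypoly); rewrite ?Y0.
- by rewrite root_ode_poly /ode_rhs subrr !(mulr0, mul0r) addr0.
- by move=> y /andP[_ y_lt1]; rewrite horner_ode_poly (ode_rhs_gt0 s g u g_gt0 y gsu y_lt1).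
- by move=> y /andP[]; lra.
Qed.
End IvpSolution.

Theorem proposition3p1 (R : realType) (s u : R) (hs : 0 < s) (hu : 0 < u) :
  (ybar2 s g u @[g --> 0^'+] --> u / s) /\
  (forall (y0 : R) (Y : R -> R -> R),
     0 <= y0 <= 1 ->
     (forall g : R, 0 < g -> is_ivp_solution s g u y0 (Y g)) ->
     exists yinf : R -> R,
       (forall g : R, 0 < g -> Y g t @[t --> +oo] --> yinf g) /\
       (yinf g @[g --> 0^'+] --> (if y0 == 1 then 1 else Num.min (u / s) 1))).
Proof.
split; first exact: ybar2_cvg.
move=> y0 Y y0_01 Ysol; exists (fun g => lim (Y g t @[t --> +oo])); split.
  move=> g g_gt0; have [L YL] := ivp_solution_cvg (Ysol g g_gt0) (ltW hu) y0_01.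
  by rewrite (cvg_lim (@Rhausdorff R) YL).
have [y0_eq1|y0_neq1] := eqVneq y0 1.
  apply: cvg_near_cst; near=> g; apply: (cvg_lim (@Rhausdorff R)).
  have g_gt0 : 0 < g by near: g; exact: nbhs_right_gt.
  exact: ivp_solution_cvg_one (Ysol g g_gt0) y0_eq1.
have y0_lt1 : y0 < 1 by rewrite lt_neqAle y0_neq1; case/andP: y0_01.
have [u_lt_s|s_le_u] := ltP u s.
- rewrite min_l ?ler_pdivrMr ?mul1r ?ltW //.
  apply: cvg_trans (ybar2_cvg hs hu); apply: near_eq_cvg; near=> g.
  have g_gt0 : 0 < g by near: g; exact: nbhs_right_gt.
  apply/esym/(cvg_lim (@Rhausdorff R)).
  exact: ivp_solution_cvg_ybar2 (Ysol g g_gt0) g_gt0 u_lt_s y0_lt1.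
- rewrite min_r ?ler_pdivlMr ?mul1r //.
  apply: cvg_near_cst; near=> g; apply: (cvg_lim (@Rhausdorff R)).
  have g_gt0 : 0 < g by near: g; exact: nbhs_right_gt.
  have g_lt_s : g < s by near: g; exact: nbhs_right_lt.
  by apply: ivp_solution_cvg_one_of_le (Ysol g g_gt0) g_gt0 _ y0_lt1; rewrite g_lt_s.
Unshelve. all: by end_near.
Qed.
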